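(* For all $a, b \in \mathbb{N}$, $R_\mathrm{cyc}(K_a, S_b) = 1 + (a-1)(b-1)$, where $S_b$ is any star graph of order $b$.
   Context: All graphs are finite, simple and undirected, and a graph of order $n$ has vertex set $\{0,1,\ldots,n-1\}$; $K_n$ is the complete graph on $\{0,\ldots,n-1\}$. A $2$-edge-coloring of $K_n$ assigns each edge a color in $\{1,2\}$. An embedding of $H$ in color $j$ is an injective map $\varphi\colon V(H)\to V(K_n)$ such that every edge $uv$ of $H$ goes to an edge $\{\varphi(u),\varphi(v)\}$ of color $j$; it is increasing up to a cyclic permutation if there exists $t\in V(H)$ such that $(\varphi(t),\ldots,\varphi(|H|-1),\varphi(0),\ldots,\varphi(t-1))$ is increasing. $R_\mathrm{cyc}(H_1,H_2)$ is the smallest $n$ such that every $2$-edge-coloring of $K_n$ admits an embedding of $H_1$ in color $1$ or of $H_2$ in color $2$ that is increasing up to a cyclic permutation. A star graph of order $n$ is a graph on $\{0,\ldots,n-1\}$ in which one vertex (the center, arbitrary) is adjacent to all others and there are no other edges. *)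

From mathcomp Require Import all_boot.
Set Implicit Arguments. Unset Strict Implicit. Unset Printing Implicit Defensive.

(* A graph of order h: vertex set 'I_h = {0,...,h-1}, adjacency a relation
   (intended symmetric and irreflexive). *)

Definition complete_graph (h : nat) : rel 'I_h := fun u v => u != v.

Definition star_graph (h : nat) (c : 'I_h) : rel 'I_h :=
  fun u v => (u != v) && ((u == c) || (v == c)).

Definition two_edge_coloring (n : nat) (col : 'I_n -> 'I_n -> nat) : Prop :=
  forall i j : 'I_n, i != j -> col i j = col j i /\ (col i j = 1 \/ col i j = 2).

Definition embedding_in_color (n h : nat) (col : 'I_n -> 'I_n -> nat)
  (H : rel 'I_h) (k : nat) (phi : 'I_h -> 'I_n) : Prop :=
  injective phi /\ forall u v : 'I_h, H u v -> col (phi u) (phi v) = k.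

Definition cyc_increasing (n h : nat) (phi : 'I_h -> 'I_n) : Prop :=
  exists t : 'I_h, sorted ltn (map (fun i => val (phi i)) (rot t (enum 'I_h))).

Definition cyc_embeds (n h : nat) (col : 'I_n -> 'I_n -> nat) (H : rel 'I_h) (k : nat) : Prop :=
  exists phi : 'I_h -> 'I_n, embedding_in_color col H k phi /\ cyc_increasing phi.

Definition cyc_ramsey_prop (h1 h2 : nat) (H1 : rel 'I_h1) (H2 : rel 'I_h2) (n : nat) : Prop :=
  forall col : 'I_n -> 'I_n -> nat, two_edge_coloring col ->
    cyc_embeds col H1 1 \/ cyc_embeds col H2 2.

Definition is_Rcyc (h1 h2 : nat) (H1 : rel 'I_h1) (H2 : rel 'I_h2) (N : nat) : Prop :=
  cyc_ramsey_prop H1 H2 N /\ forall m, m < N -> ~ cyc_ramsey_prop H1 H2 m.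
Arguments complete_graph h : clear implicits.
Arguments star_graph h c : clear implicits.

From mathcomp Require Import all_boot zify.

Set Implicit Arguments.
Unset Strict Implicit.
Unset Printing Implicit Defensive.

(* Upper bound: if some vertex v has b - 1 neighbours in colour 2, then v and
   these neighbours carry a colour-2 star centred at v.  Otherwise every
   colour-2 neighbourhood has fewer than b - 1 vertices, so picking a vertex and
   discarding it together with its colour-2 neighbourhood, a - 1 times, costs at
   most (a - 1)(b - 1) vertices and leaves a colour-1 clique on a vertices.  In
   both cases, listing the chosen vertices in increasing order and rotating the
   list gives a cyclically increasing embedding sending any prescribed vertex of
   H to any prescribed chosen vertex.
   Lower bound: cut (a - 1)(b - 1) vertices into a - 1 blocks of b - 1
   consecutive vertices and colour an edge 2 inside a block, 1 across blocks; a
   colour-1 clique meets each block at most once and a colour-2 star lies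
   inside one block. *)

Section CyclicallySorted.

Variables (T : Type) (r : rel T).

Definition cyc_sorted (s : seq T) : Prop := exists t, sorted r (rot t s).

Lemma sorted_cyc_sorted s : sorted r s -> cyc_sorted s.
Proof. by exists 0; rewrite rot0. Qed.

Lemma cyc_sorted_rot m s : cyc_sorted s -> cyc_sorted (rot m s).
Proof.
case=> t; rewrite -{1}(rotK m s) /rotr rot_rot_add => sorted_t.
by exists (rot_add (rot m s) (size (rot m s) - m) t).
Qed.

Lemma cyc_sorted_rotr m s : cyc_sorted s -> cyc_sorted (rotr m s).
Proof. exact: cyc_sorted_rot. Qed.

End CyclicallySorted.

Lemma nth_rotr_cons (T : Type) (x0 x : T) s i :
  i <= size s -> nth x0 (rotr i (x :: s)) i = x.
Proof.
move=> le_i_s; rewrite /rotr /rot nth_cat size_drop /= subKn ?ltnn ?subnn //.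
  by rewrite subSn.
exact: leqW.
Qed.

Lemma sorted_enum_set n (A : {set 'I_n}) : sorted ltn (map val (enum A)).
Proof.
rewrite -[enum _](eq_filter (mem_enum _)) -(eq_filter (mem_map val_inj _)).
by rewrite -filter_map (sorted_filter ltn_trans) // unlock val_ord_enum iota_ltn_sorted.
Qed.

Lemma cyc_increasing_inj n h (phi : 'I_h -> 'I_n) :
  cyc_increasing phi -> injective phi.
Proof.
case=> t /(sorted_uniq ltn_trans ltnn); rewrite map_rot rot_uniq => uniq_phi.
have /injectiveP inj_val_phi : injectiveb (fun i => val (phi i)) by [].
by move=> i j /(congr1 val) /inj_val_phi.
Qed.

Lemma cyc_increasing_nth n h (x0 : 'I_n) (u : seq 'I_n) :
  0 < h -> size u = h -> cyc_sorted ltn (map val u) ->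
  cyc_increasing (fun i : 'I_h => nth x0 u i).
Proof.
move=> h_gt0 size_u [t sorted_t].
have map_nth_enum : map (fun i : 'I_h => nth x0 u i) (enum 'I_h) = u.
  by rewrite (map_comp (nth x0 u) val) val_enum_ord -size_u; apply: mkseq_nth.
have [t_lt_h | t_ge_h] := ltnP t h.
  by exists (Ordinal t_lt_h); rewrite /= map_rot (map_comp val) map_nth_enum.
exists (Ordinal h_gt0); rewrite /= rot0 (map_comp val) map_nth_enum.
by rewrite rot_oversize ?size_map ?size_u in sorted_t.
Qed.

Lemma cyc_increasing_onto_set n h (S : {set 'I_n}) (v : 'I_n) (c : 'I_h) :
  #|S| = h -> v \in S ->
  exists phi : 'I_h -> 'I_n,
    [/\ forall i, phi i \in S, phi c = v & cyc_increasing phi].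
Proof.
move=> card_S; rewrite -mem_enum => /rot_to[k s enum_S].
pose u := rotr c (v :: s).
have size_u : size u = h by rewrite size_rotr -enum_S size_rot -cardE.
exists (fun i => nth v u i); split.
- move=> i; rewrite -mem_enum -(mem_rot k) enum_S -(mem_rotr c).
  by apply: mem_nth; rewrite size_u.
- by apply: nth_rotr_cons; move: (ltn_ord c); rewrite -[X in _ < X]size_u size_rotr.
- apply: cyc_increasing_nth => //; first exact: leq_ltn_trans (ltn_ord c).
  rewrite /u map_rotr -enum_S map_rot.
  exact/cyc_sorted_rotr/cyc_sorted_rot/sorted_cyc_sorted/sorted_enum_set.
Qed.

Lemma star_embedding n h (col : 'I_n -> 'I_n -> nat) (c : 'I_h)
    (phi : 'I_h -> 'I_n) k :
  two_edge_coloring col -> injective phi ->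
  (forall w, w != c -> col (phi c) (phi w) = k) ->
  embedding_in_color col (star_graph h c) k phi.
Proof.
move=> col2 inj_phi center_k; split=> // u w /andP[u_w /orP[] /eqP E]; subst.
  by apply: center_k; rewrite eq_sym.
have phi_u_c : phi u != phi c by rewrite (inj_eq inj_phi).
by have [-> _] := col2 _ _ phi_u_c; apply: center_k.
Qed.

Definition color_nbhd n (col : 'I_n -> 'I_n -> nat) k (v : 'I_n) : {set 'I_n} :=
  [set u | (u != v) && (col v u == k)].

Definition monochromatic n (col : 'I_n -> 'I_n -> nat) k (C : {set 'I_n}) : Prop :=
  {in C &, forall x y, x != y -> col x y = k}.

Lemma greedy_clique n (col : 'I_n -> 'I_n -> nat) d :
  two_edge_coloring col -> (forall v, #|color_nbhd col 2 v| < d) ->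
  forall k (S : {set 'I_n}), k * d < #|S| ->
  exists C : {set 'I_n}, [/\ C \subset S, #|C| = k.+1 & monochromatic col 1 C].
Proof.
move=> col2 small_nbhd; elim=> [|k IH] S card_S.
  have /card_gt0P[v Sv] : 0 < #|S| by apply: leq_ltn_trans card_S.
  exists [set v]; rewrite sub1set cards1; split=> // x y.
  by rewrite !inE => /eqP-> /eqP->; rewrite eqxx.
have /card_gt0P[v Sv] : 0 < #|S| by apply: leq_ltn_trans card_S.
set S' := S :\: (v |: color_nbhd col 2 v).
have card_S' : k * d < #|S'|.
  have removed : #|S :&: (v |: color_nbhd col 2 v)| <= d.
    rewrite (leq_trans (subset_leq_card (subsetIr _ _))) //.
    by rewrite (leq_trans (leq_card_setU _ _)) // cards1 add1n small_nbhd.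
  by rewrite cardsD; move: card_S removed; rewrite mulSn; move: (k * d); lia.
have [C [sub_C card_C mono_C]] := IH S' card_S'.
have col_v y : y \in C -> col v y = 1.
  move/(subsetP sub_C); rewrite !inE negb_or => /andP[/andP[y_v]].
  rewrite y_v /= => not_2 _; rewrite eq_sym in y_v.
  by have [_ [] // col_2] := col2 v y y_v; rewrite col_2 in not_2.
have vC : v \notin C by apply/negP => /(subsetP sub_C); rewrite !inE eqxx.
exists (v |: C); split.
- by rewrite subUset sub1set Sv (subset_trans sub_C) ?subsetDl.
- by rewrite cardsU1 vC card_C.
- move=> x y; rewrite !in_setU1 => /predU1P[-> | Cx] /predU1P[-> | Cy].
  + by rewrite eqxx.
  + by move=> _; apply: col_v.
  + by move=> x_v; have [-> _] := col2 _ _ x_v; apply: col_v.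
  + exact: mono_C.
Qed.

Lemma cyc_ramsey_clique_star a b (c : 'I_b) n :
  0 < a -> (a - 1) * (b - 1) < n ->
  cyc_ramsey_prop (complete_graph a) (star_graph b c) n.
Proof.
move=> a_gt0 n_large col col2.
case: (pickP (fun v => b - 1 <= #|color_nbhd col 2 v|)) => [v big_nbhd | small].
  have [s [uniq_s size_s sub_s]] := card_geqP big_nbhd.
  have vs : v \notin s by apply/negP => /sub_s; rewrite inE eqxx.
  have card_S : #|[set x in v :: s]| = b.
    rewrite cardsE (card_uniqP _) /= ?vs // size_s.
    by have := ltn_ord c; lia.
  have vS : v \in [set x in v :: s] by rewrite inE mem_head.
  have [phi [in_S phi_c cyc_phi]] := cyc_increasing_onto_set c card_S vS.
  right; exists phi; split=> //; have inj_phi := cyc_increasing_inj cyc_phi.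
  apply: star_embedding => // w w_c.
  have := in_S w; rewrite inE in_cons -phi_c (inj_eq inj_phi) (negbTE w_c) /=.
  by move=> /sub_s; rewrite inE phi_c => /andP[_ /eqP].
have {}small v : #|color_nbhd col 2 v| < b - 1 by rewrite ltnNge small.
have card_T : (a - 1) * (b - 1) < #|[set: 'I_n]| by rewrite cardsT card_ord.
have [C [_ card_C mono_C]] := greedy_clique col2 small card_T.
have /card_gt0P[v Cv] : 0 < #|C| by rewrite card_C.
have {}card_C : #|C| = a by rewrite card_C; lia.
have [phi [in_C _ cyc_phi]] := cyc_increasing_onto_set (Ordinal a_gt0) card_C Cv.
left; exists phi; split=> //; have inj_phi := cyc_increasing_inj cyc_phi.
by split=> // u w u_w; apply: mono_C; rewrite ?in_C ?(inj_eq inj_phi).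
Qed.

Definition block_coloring n d (i j : 'I_n) : nat :=
  if i %/ d == j %/ d then 2 else 1.

Lemma block_coloring_two_edge n d : two_edge_coloring (@block_coloring n d).
Proof. by move=> i j _; rewrite /block_coloring eq_sym; case: ifP; auto. Qed.

Lemma block_clique_le n d p a (phi : 'I_a -> 'I_n) :
  n <= p * d -> embedding_in_color (block_coloring d) (complete_graph a) 1 phi ->
  a <= p.
Proof.
move=> n_le [_ col1].
have block_lt u : phi u %/ d < p.
  have d_gt0 : 0 < d.
    have [d0 | //] := posnP d.
    by move: (ltn_ord (phi u)) n_le; rewrite d0 muln0; lia.
  by rewrite ltn_divLR // (leq_trans (ltn_ord _) n_le).
pose f u := Ordinal (block_lt u).
have inj_f : injective f.
  move=> u w /(congr1 val) /= same_block; apply/eqP/negPn/negP => u_w.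
  by have := col1 u w u_w; rewrite /block_coloring same_block eqxx.
by rewrite -[a]card_ord -[p]card_ord (leq_card _ inj_f).
Qed.

Lemma block_star_le n d p b (c : 'I_b) (phi : 'I_b -> 'I_n) :
  n <= p * d -> embedding_in_color (block_coloring d) (star_graph b c) 2 phi ->
  b <= d.
Proof.
move=> n_le [inj_phi col2].
have d_gt0 : 0 < d.
  have [d0 | //] := posnP d.
  by move: (ltn_ord (phi c)) n_le; rewrite d0 muln0; lia.
have same_block u : phi u %/ d = phi c %/ d.
  have [-> // | u_c] := eqVneq u c.
  have := col2 u c; rewrite /star_graph u_c eqxx orbT /block_coloring.
  by case: eqP => // _ /(_ isT).
pose f u := Ordinal (ltn_pmod (phi u) d_gt0).
have inj_f : injective f.
  move=> u w /(congr1 val) /= same_rem; apply/inj_phi/val_inj => /=.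
  by rewrite (divn_eq (phi u) d) (divn_eq (phi w) d) !same_block same_rem.
by rewrite -[b]card_ord -[d]card_ord (leq_card _ inj_f).
Qed.

Lemma not_cyc_ramsey_block a b (c : 'I_b) m :
  0 < a -> 0 < b -> m < 1 + (a - 1) * (b - 1) ->
  ~ cyc_ramsey_prop (complete_graph a) (star_graph b c) m.
Proof.
move=> a_gt0 b_gt0 m_small /(_ _ (@block_coloring_two_edge m (b - 1))).
have m_le : m <= (a - 1) * (b - 1) by [].
case=> -[phi [emb _]].
  by have := block_clique_le m_le emb; lia.
by have := block_star_le m_le emb; lia.
Qed.

Theorem corollary4p26 (a b : nat) (c : 'I_b) :
  1 <= a -> 1 <= b ->
  is_Rcyc (complete_graph a) (star_graph b c) (1 + (a - 1) * (b - 1)).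
Proof.
move=> a_gt0 b_gt0; split; first exact: cyc_ramsey_clique_star.
by move=> m; apply: not_cyc_ramsey_block.
Qed.
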